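(* Let $n\ge2$ and let $G=(V,E)$ be a $k$-edge-connected graph on $n$ vertices with $k\ge 7\log_2 n$. Then $G$ has a hierarchy $\mathcal T$ that is a $(k/20,1/4,T)$-LCH of $G$, where $T$ is the set of all non-root nodes of $\mathcal T$, and such that for every non-leaf node $t$ of $\mathcal T$ the graph $G\{t\}$ is a $(1/k)$-expander.
   Context: Graphs are finite, undirected, unweighted, loopless, possibly with parallel edges; $k$-edge-connected means every cut $(S,\overline S)$, $\emptyset\ne S\subsetneq V$, has at least $k$ edges (a one-vertex graph counts as $k$-edge-connected). For a graph $H$ and $S\subseteq V(H)$: $\partial_H(S)$ is the number of edges leaving $S$, $d_H(S)$ is the sum of degrees of vertices of $S$, and $\phi(H)=\min_{\emptyset\ne S\subsetneq V(H)}\partial_H(S)/\min\{d_H(S),d_H(V(H)\setminus S)\}$; $H$ is an $\epsilon$-expander if $\phi(H)\ge\epsilon$. A hierarchy of $G$ is a rooted tree $\mathcal T$ in which every non-leaf node has at least two children and whose leaves are in bijection with $V$. For a node $t$: $V(t)$ is the set of vertices at the leaves of its subtree; $E(t)$ the edges inside $V(t)$; $G(t)=(V(t),E(t))$; $\mathcal P(t)=E(V(t),V\setminus V(t))$; for non-root $t$ with parent $t^*$, $\mathcal O(t)=E(V(t),V(t^* )\setminus V(t))$. For $k>0$, $0<\lambda<1$ and a set $T$ of non-root nodes, $\mathcal T$ is a $(k,\lambda,T)$-LCH if $G(t)$ is $k$-edge-connected for all nodes $t$ and $|\mathcal O(t)|\ge\lambda|\mathcal P(t)|$ for all $t\in T$.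 For a non-leaf node $t$ with children $t_1,\dots,t_j$, $G\{t\}$ is the multigraph obtained from $G(t)$ by contracting each $V(t_i)$ into a single vertex and deleting loops. *)

From mathcomp Require Import all_boot.
From Stdlib Require Import Reals.

Set Implicit Arguments.
Unset Strict Implicit.
Unset Printing Implicit Defensive.

(* A multigraph G = (V,E) is given by finite types V, E and endpoint maps
   src dst : E -> V (looplessness is a hypothesis: src e != dst e). *)

Definition cutE (V E : finType) (src dst : E -> V) (A S : {set V}) : nat :=
  #|[set e : E | [&& src e \in A, dst e \in A & (src e \in S) != (dst e \in S)]]|.

(* G[A] is k-edge-connected: every cut (S, A\S), S nonempty proper, has >= k edges.
   (A one-vertex A is vacuously k-edge-connected.) *)
Definition kEdgeConn (V E : finType) (src dst : E -> V) (k : R) (A : {set V}) : Prop :=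
  forall S : {set V}, S \subset A -> S != set0 -> S != A ->
    Rle k (INR (cutE src dst A S)).

Definition between (V E : finType) (src dst : E -> V) (X Y : {set V}) : nat :=
  #|[set e : E | ((src e \in X) && (dst e \in Y)) || ((src e \in Y) && (dst e \in X))]|.

(* Rooted trees on a finite node type N, given by a parent map. *)
Definition upr (N : finType) (par : N -> option N) : rel N :=
  fun x y => par x == Some y.

Definition children (N : finType) (par : N -> option N) (t : N) : {set N} :=
  [set c | par c == Some t].

Definition is_hierarchy (V N : finType) (par : N -> option N) (lf : V -> N) : Prop :=
  [/\ exists r : N, par r = None /\ (forall u : N, connect (upr par) u r),
      (forall t : N, children par t != set0 -> 1 < #|children par t|),
      injective lf
    & (forall t : N, children par t = set0 <-> exists v : V, lf v = t)].

Definition Vt (V N : finType) (par : N -> option N) (lf : V -> N) (t : N) : {set V} :=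
  [set v | connect (upr par) (lf v) t].

(* Degree in G{t} of the contracted vertex V(c), c a child of t: number of edges of
   G(t) with exactly one end in V(c) (loops of the contraction are deleted). *)
Definition degC (V E N : finType) (src dst : E -> V) (par : N -> option N)
  (lf : V -> N) (t c : N) : nat :=
  cutE src dst (Vt par lf t) (Vt par lf c).

Definition dC (V E N : finType) (src dst : E -> V) (par : N -> option N)
  (lf : V -> N) (t : N) (S : {set N}) : nat :=
  \sum_(c in S) degC src dst par lf t c.

(* partial_{G{t}}(S): edges of G(t) between a child in S and a child not in S,
   i.e. edges of G(t) with exactly one end in the union of the V(c), c in S. *)
Definition bdC (V E N : finType) (src dst : E -> V) (par : N -> option N)
  (lf : V -> N) (t : N) (S : {set N}) : nat :=
  cutE src dst (Vt par lf t) (\bigcup_(c in S) Vt par lf c).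

(* G{t} is an eps-expander: phi(G{t}) >= eps, i.e. for every nonempty proper set S
   of vertices of G{t}, partial(S) / min(d(S), d(complement)) >= eps
   (stated multiplicatively). *)
Definition contr_expander (V E N : finType) (src dst : E -> V) (par : N -> option N)
  (lf : V -> N) (eps : R) (t : N) : Prop :=
  forall S : {set N}, S \subset children par t -> S != set0 -> S != children par t ->
    Rle (eps * INR (minn (dC src dst par lf t S)
                         (dC src dst par lf t (children par t :\: S))))
        (INR (bdC src dst par lf t S)).

From mathcomp Require Import all_boot.
From Stdlib Require Import Reals Lra Lia Classical.
From mathcomp Require Import zify.

Set Implicit Arguments.
Unset Strict Implicit.
Unset Printing Implicit Defensive.

(* Start from the partition of V into singletons and repeatedly merge a cluster
   of parts into a single part; the merged sets, together with the singletons,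
   form a laminar family whose inclusion tree is the hierarchy.  With
   vol X = sum of the boundaries of the parts in X and
   alpha s = 1/10 + (2/k) log2 (n/s), the cluster is a smallest set X of parts
   with  d(cover X) <= alpha |X| * vol X - (k/10) (|X| - 1).  The whole partition
   qualifies since every part has boundary >= k.  Comparing this inequality for X
   with its failure on both sides of a split of X shows that the split is crossed
   by more than k/20 edges, and by at least (1/k) times the volume of the
   smaller side, since halving the number of parts raises alpha by 2/k; and as
   alpha <= 1/2 (because k >= 7 log2 n), every part of X keeps a quarter of its
   boundary inside X. *)

Section CutCounting.
Variables (V E : finType) (src dst : E -> V).
Local Notation between := (between src dst).
Local Notation cutE := (cutE src dst).

Definition boundary (A : {set V}) : nat := between A (~: A).

Lemma card_set_indicator (P : pred E) : #|[set e | P e]| = \sum_(e : E) (P e : nat).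
Proof. by rewrite -sum1_card big_mkcond /=; apply: eq_bigr => e _; rewrite inE; case: (P e). Qed.

Lemma betweenC (A B : {set V}) : between A B = between B A.
Proof. by apply: eq_card => e; rewrite !inE orbC. Qed.

Lemma boundary_setU (A B : {set V}) : [disjoint A & B] ->
  boundary A + boundary B = boundary (A :|: B) + 2 * between A B.
Proof.
move=> dAB; rewrite /boundary /between !card_set_indicator -big_split big_distrr -big_split.
apply: eq_bigr => e _; rewrite !inE.
case sA: (src e \in A); case sB: (src e \in B);
  case dA: (dst e \in A); case dB: (dst e \in B) => //=;
  by rewrite ?(disjointFr dAB sA) in sB; rewrite ?(disjointFr dAB dA) in dB.
Qed.

Lemma cutE_between (A S : {set V}) : S \subset A -> cutE A S = between S (A :\: S).
Proof.
move=> /subsetP sSA; apply: eq_card => e; rewrite !inE.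
case sS: (src e \in S); case dS: (dst e \in S) => /=;
  rewrite ?(sSA _ sS) ?(sSA _ dS) ?andbT ?andbF //= ?orbF; by case: (_ \in A).
Qed.

Lemma cutE_setT (S : {set V}) : cutE [set: V] S = boundary S.
Proof. by rewrite cutE_between ?subsetT // setTD. Qed.

Lemma boundary_setT : boundary [set: V] = 0.
Proof. by apply/eqP; rewrite cards_eq0; apply/eqP/setP => e; rewrite !inE !andbF. Qed.

Lemma cutE_le_boundary (A S : {set V}) : cutE A S <= boundary S.
Proof.
apply: subset_leq_card; apply/subsetP => e; rewrite !inE.
by case: (src e \in S); case: (dst e \in S); rewrite ?andbF.
Qed.

Lemma cutE_setI_le (A B S : {set V}) : A \subset B -> cutE A (S :&: A) <= cutE B S.
Proof.
move=> /subsetP sAB; apply: subset_leq_card; apply/subsetP => e; rewrite !inE.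
by case/and3P=> sa da; rewrite sa da !andbT (sAB _ sa) (sAB _ da).
Qed.

End CutCounting.

Lemma INR_addn (m n : nat) : INR (m + n) = (INR m + INR n)%R.
Proof. exact: plus_INR. Qed.

Lemma INR_muln (m n : nat) : INR (m * n) = (INR m * INR n)%R.
Proof. exact: mult_INR. Qed.

Lemma ln_le (x y : R) : (0 < x)%R -> (x <= y)%R -> (ln x <= ln y)%R.
Proof. by move=> x0 [/(ln_increasing _ _ x0)/Rlt_le|->]; last exact: Rle_refl. Qed.

Lemma ln2_pos : (0 < ln 2)%R.
Proof. rewrite -ln_1; apply: ln_increasing; lra. Qed.

Lemma INR_ge1 (a : nat) : (0 < a)%N -> (1 <= INR a)%R.
Proof. by move=> /leP; apply: (le_INR 1). Qed.

Definition log2 (x : R) : R := (ln x / ln 2)%R.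

Lemma log2_le (x y : R) : (0 < x)%R -> (x <= y)%R -> (log2 x <= log2 y)%R.
Proof.
move=> x0 xy; apply: Rmult_le_compat_r; last exact: ln_le.
by apply/Rlt_le/Rinv_0_lt_compat/ln2_pos.
Qed.

Lemma log2_double (x : R) : (0 < x)%R -> log2 (2 * x) = (1 + log2 x)%R.
Proof.
move=> x0; have l2 := ln2_pos.
by rewrite /log2 ln_mult; [field; lra | lra | lra].
Qed.

Lemma log2_ge0 (x : R) : (1 <= x)%R -> (0 <= log2 x)%R.
Proof. by move=> x1; rewrite -(Rmult_0_l (/ ln 2)) /log2 -ln_1; apply: log2_le; lra. Qed.

Section Weight.
Variables (n : nat) (k : R).
Hypothesis n_ge2 : (2 <= n)%N.
Hypothesis k_ge : (7 * log2 (INR n) <= k)%R.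

Lemma k_ge7 : (7 <= k)%R.
Proof.
have n2 : (2 <= INR n)%R by apply: (le_INR 2); apply/leP.
have := log2_le Rlt_0_2 n2; rewrite {1}/log2 Rdiv_diag; [lra | exact/Rgt_not_eq/ln2_pos].
Qed.

Definition alpha (s : nat) : R := (/10 + 2 / k * (log2 (INR n) - log2 (INR s)))%R.

Lemma k_pos : (0 < k)%R.
Proof. by have := k_ge7; lra. Qed.

Lemma two_div_k_pos : (0 < 2 / k)%R.
Proof. by apply: Rdiv_lt_0_compat; [lra | exact: k_pos]. Qed.

Lemma log2_INR_le (a b : nat) : (0 < a)%N -> (a <= b)%N -> (log2 (INR a) <= log2 (INR b))%R.
Proof. by move=> a0 ab; apply: log2_le; [have := INR_ge1 a0; lra | exact/le_INR/leP]. Qed.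

Lemma alpha_antimono (a b : nat) : (0 < a)%N -> (a <= b)%N -> (alpha b <= alpha a)%R.
Proof.
move=> a0 ab; have lab := log2_INR_le a0 ab.
by apply: Rplus_le_compat_l; apply: Rmult_le_compat_l; [exact: Rlt_le two_div_k_pos | lra].
Qed.

Lemma alpha_double (a b : nat) : (0 < a)%N -> (a.*2 <= b)%N -> (alpha b + 2 / k <= alpha a)%R.
Proof.
move=> a0 ab; have a1 := INR_ge1 a0; have a2 : (0 < 2 * INR a)%R by lra.
have ab' : (2 * INR a <= INR b)%R.
  by have := le_INR _ _ (elimT leP ab); rewrite -mul2n INR_muln /=; lra.
have gap : (1 <= log2 (INR b) - log2 (INR a))%R.
  by have := log2_le a2 ab'; rewrite log2_double; lra.
have -> : (alpha a = alpha b + 2 / k * (log2 (INR b) - log2 (INR a)))%R by rewrite /alpha; ring.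
by have := Rmult_le_compat_l _ _ _ (Rlt_le _ _ two_div_k_pos) gap; lra.
Qed.

Lemma alpha_ge_tenth (s : nat) : (0 < s)%N -> (s <= n)%N -> (/10 <= alpha s)%R.
Proof.
move=> s0 sn; have := Rmult_le_compat_l _ _ _ (Rlt_le _ _ two_div_k_pos) (log2_INR_le s0 sn).
by rewrite /alpha; lra.
Qed.

Lemma alpha_le_half (s : nat) : (0 < s)%N -> (alpha s <= /2)%R.
Proof.
move=> s0; have k7 := k_ge7; have ls := log2_ge0 (INR_ge1 s0).
have lk : (2 / k * log2 (INR n) <= 2 / 7)%R.
  apply: (Rmult_le_reg_l k); first lra.
  by rewrite -Rmult_assoc; field_simplify; lra.
have := Rmult_le_pos _ _ (Rlt_le _ _ two_div_k_pos) ls.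
rewrite /alpha; lra.
Qed.

End Weight.

Lemma ex_minimizer (T : Type) (f : T -> nat) (Q : T -> Prop) :
  (exists x, Q x) -> exists x, Q x /\ forall y, Q y -> (f x <= f y)%N.
Proof.
case=> x0; elim: (f x0).+1 {-2}x0 (ltnSn (f x0)) => // m IH x fxm Qx.
case: (classic (exists y, Q y /\ (f y < f x)%N)) => [[y [Qy fyx]]|nlt].
  by apply: (IH y) => //; apply: leq_trans fyx _; rewrite -ltnS.
by exists x; split=> // y Qy; rewrite leqNgt; apply/negP => fyx; apply: nlt; exists y.
Qed.

Lemma sum_INR_ge (T : finType) (A : {set T}) (f : T -> nat) (r : R) :
  (forall x, x \in A -> (r <= INR (f x))%R) -> (INR #|A| * r <= INR (\sum_(x in A) f x))%R.
Proof.
move=> fA; rewrite -sum1_card.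
elim/big_rec2: _ => [|i m s iA IH]; first by rewrite /= Rmult_0_l; apply: Rle_refl.
by rewrite !INR_addn /=; have := fA i iA; lra.
Qed.

Lemma imsetD_inj (aT rT : finType) (f : aT -> rT) (A B : {set aT}) :
  injective f -> f @: (A :\: B) = f @: A :\: f @: B.
Proof.
move=> f_inj; apply/setP => y; rewrite inE; apply/imsetP/andP.
  by case=> x /setDP[xA xB] ->; rewrite (mem_imset _ _ f_inj) xB imset_f.
case=> nB /imsetP[x xA y_fx]; exists x => //; rewrite inE xA andbT.
by move: nB; rewrite y_fx (mem_imset _ _ f_inj).
Qed.

Lemma set0_notin_neq0 (T : finType) (F : {set {set T}}) (A : {set T}) :
  set0 \notin F -> A \in F -> A != set0.
Proof. by move=> F0 AF; apply: contraNneq F0 => <-. Qed.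

Lemma nonempty_disjoint_sub (T : finType) (A B : {set T}) :
  A != set0 -> A \subset B -> ~~ [disjoint A & B].
Proof. by case/set0Pn => v vA /subsetP sAB; apply/negP => /disjointFr/(_ vA); rewrite sAB. Qed.

Lemma disjoint_setDr (T : finType) (A B : {set T}) : [disjoint A & B :\: A].
Proof. by rewrite disjoint_sym; case/subsetDP: (subxx (B :\: A)). Qed.

Section CoverSplit.
Variables (T : finType) (X S : {set {set T}}).
Hypothesis sSX : S \subset X.

Lemma cover_setU_setD : cover S :|: cover (X :\: S) = cover X.
Proof. by rewrite /cover -bigcup_setU -{2}(setID X S) (setIidPr sSX). Qed.

Hypothesis tiX : trivIset X.

Lemma cover_setD : cover (X :\: S) = cover X :\: cover S.
Proof.
apply/setP => v; rewrite inE; apply/bigcupP/andP => [[q /setDP[qX qS] vq]|[vS /bigcupP[q qX vq]]].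
  split; last by apply/bigcupP; exists q.
  apply/bigcupP => -[r rS vr]; have rq : r != q by apply: contraNneq qS => <-.
  by rewrite (disjointFr (elimT trivIsetP tiX r q (subsetP sSX _ rS) qX rq) vr) in vq.
exists q => //; rewrite inE qX andbT; by apply: contra vS => qS; apply/bigcupP; exists q.
Qed.

Lemma disjoint_cover_setD : [disjoint cover S & cover (X :\: S)].
Proof. by rewrite cover_setD disjoint_setDr. Qed.

End CoverSplit.

Lemma setD_nontrivial (T : finType) (X S : {set T}) :
  S \subset X -> S != set0 -> S != X -> X :\: S != set0 /\ X :\: S != X.
Proof.
move=> sSX S0 SX; split.
  by rewrite setD_eq0; apply: contra SX => sXS; rewrite eqEsubset sSX.
apply: contra S0 => /eqP XS; apply/eqP/setP => x; rewrite inE.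
by apply/negP => Sx; move: (subsetP sSX _ Sx); rewrite -XS inE Sx.
Qed.

Lemma setDDK (T : finType) (X S : {set T}) : S \subset X -> X :\: (X :\: S) = S.
Proof. by move=> sSX; rewrite setDDr setDv set0U (setIidPr sSX). Qed.

Section Cluster.
Variables (V E : finType) (src dst : E -> V) (k : R).
Hypothesis n_ge2 : (2 <= #|V|)%N.
Hypothesis k_ge : (7 * log2 (INR #|V|) <= k)%R.
Hypothesis boundary_ge_k :
  forall S : {set V}, S != set0 -> S != setT -> (k <= INR (boundary src dst S))%R.
Variable P : {set {set V}}.
Hypothesis partP : partition P [set: V].
Hypothesis P_gt1 : (1 < #|P|)%N.
Implicit Types (X Y S : {set {set V}}) (p : {set V}).

Local Notation boundary := (boundary src dst).
Local Notation between := (between src dst).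
Local Notation alpha := (alpha #|V| k).

Definition volume X : nat := \sum_(p in X) boundary p.

Definition candidate X : Prop :=
  [/\ X \subset P, X != set0 &
      (INR (boundary (cover X)) <= alpha #|X| * INR (volume X) - k / 10 * (INR #|X| - 1))%R].

Let k_gt0 : (0 < k)%R := k_pos n_ge2 k_ge.
Let tiP : trivIset P := partition_trivIset partP.
Let P_neq0 : P != set0. Proof. by rewrite -card_gt0 ltnW. Qed.

Lemma card_partition_le : (#|P| <= #|V|)%N.
Proof.
rewrite -cardsT (card_partition partP) -sum1_card; apply: leq_sum => p pP.
by rewrite card_gt0 (partition_neq0 partP pP).
Qed.

Lemma cover_neq0 X : X \subset P -> X != set0 -> cover X != set0.
Proof.
move=> sXP /set0Pn[p pX]; have /set0Pn[v vp] := partition_neq0 partP (subsetP sXP _ pX).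
by apply/set0Pn; exists v; apply/bigcupP; exists p.
Qed.

Lemma cover_neqT X : X \subset P -> X != P -> cover X != setT.
Proof.
move=> sXP XP; have P_X0 : P :\: X != set0.
  by rewrite setD_eq0; apply: contra XP => sPX; rewrite eqEsubset sXP.
have := cover_neq0 (subsetDl P X) P_X0.
rewrite (cover_setD sXP tiP) (cover_partition partP); apply: contra => /eqP ->.
by rewrite setDv.
Qed.

Lemma boundary_part_ge p : p \in P -> (k <= INR (boundary p))%R.
Proof.
move=> pP; apply: boundary_ge_k; first exact: partition_neq0 partP pP.
rewrite -[p]cover1; apply: cover_neqT; first by rewrite sub1set.
by apply: contraTneq P_gt1 => <-; rewrite cards1.
Qed.

Lemma candidate_P : candidate P.
Proof.
split=> //; rewrite (cover_partition partP) boundary_setT /=.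
have vol_ge : (INR #|P| * k <= INR (volume P))%R by apply: sum_INR_ge => p; exact: boundary_part_ge.
have := alpha_ge_tenth n_ge2 k_ge (ltnW P_gt1) card_partition_le.
move/(Rmult_le_compat_r _ _ _ (pos_INR (volume P))).
move: vol_ge (k_gt0); set a := alpha _; set d := INR _; set c := INR _; lra.
Qed.

Section MinimalCandidate.
Variable X : {set {set V}}.
Hypothesis candX : candidate X.
Hypothesis minX : forall Y, candidate Y -> (#|X| <= #|Y|)%N.

Let sXP : X \subset P. Proof. by case: candX. Qed.
Let tiX : trivIset X := trivIsetS sXP tiP.

Lemma proper_sub_not_candidate Y : Y \subset X -> Y != X -> Y != set0 ->
  (alpha #|Y| * INR (volume Y) - k / 10 * (INR #|Y| - 1) < INR (boundary (cover Y)))%R.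
Proof.
move=> sYX YX Y0; apply: Rnot_le_lt => Ycand.
have /minX : candidate Y by split=> //; exact: subset_trans sYX sXP.
by apply/negP; rewrite -ltnNge; apply: proper_card; rewrite properEneq YX.
Qed.

Lemma card_cluster_gt1 : (1 < #|X|)%N.
Proof.
case: candX => _ X0 bX; rewrite ltnNge; apply/negP => X_le1.
have /cards1P[p Xp] : #|X| == 1%N by rewrite eqn_leq X_le1 card_gt0.
move: bX; rewrite Xp cover1 cards1 /volume big_set1 /= Rminus_diag Rmult_0_r Rminus_0_r.
have pP : p \in P by apply: (subsetP sXP); rewrite Xp set11.
have := alpha_le_half n_ge2 k_ge (ltn0Sn 0).
move/(Rmult_le_compat_r _ _ _ (pos_INR (boundary p))).
move: (boundary_part_ge pP) (k_gt0); set a := alpha _; set b := INR _; lra.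
Qed.

Lemma cut_cover_cluster S : S \subset X ->
  cutE src dst (cover X) (cover S) = between (cover S) (cover (X :\: S)).
Proof.
by move=> sSX; rewrite cutE_between ?(cover_setD sSX tiX) // -(cover_setU_setD sSX) subsetUl.
Qed.

Lemma split_gain S : S \subset X -> S != set0 -> S != X ->
  ((alpha #|S| - alpha #|X|) * INR (volume S)
   + (alpha #|X :\: S| - alpha #|X|) * INR (volume (X :\: S)) + k / 10
     < 2 * INR (between (cover S) (cover (X :\: S))))%R.
Proof.
move=> sSX S0 SX; have [T0 TX] := setD_nontrivial sSX S0 SX.
have hS := proper_sub_not_candidate sSX SX S0.
have hT := proper_sub_not_candidate (subsetDl X S) TX T0.
have := boundary_setU src dst (disjoint_cover_setD sSX tiX).
rewrite (cover_setU_setD sSX) => /(f_equal INR); rewrite 2!INR_addn INR_muln => eb.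
case: candX => _ _.
have -> : volume X = (volume S + volume (X :\: S))%N.
  by rewrite /volume (big_setID S) (setIidPr sSX).
have -> : INR #|X| = (INR #|S| + INR #|X :\: S|)%R.
  by rewrite -INR_addn -(cardsID S X) (setIidPr sSX).
rewrite INR_addn; move: hS hT eb.
set aS := alpha #|S|; set aT := alpha #|X :\: S|; set aX := alpha #|X|.
set dS := INR (volume S); set dT := INR (volume _); set e := INR (between _ _).
set bS := INR (boundary (cover S)); set bT := INR (boundary _); set bX := INR (boundary _).
set sS := INR #|S|; set sT := INR _; rewrite [INR 2]/=; lra.
Qed.

Lemma weight_gap_ge0 S : S \subset X -> S != set0 ->
  (0 <= (alpha #|S| - alpha #|X|) * INR (volume S))%R.
Proof.
move=> sSX S0; apply: Rmult_le_pos; last exact: pos_INR.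
have S_pos : (0 < #|S|)%N by rewrite card_gt0.
by have := alpha_antimono n_ge2 k_ge S_pos (subset_leq_card sSX); lra.
Qed.

Lemma cluster_cut_ge S : S \subset X -> S != set0 -> S != X ->
  (k / 20 <= INR (cutE src dst (cover X) (cover S)))%R.
Proof.
move=> sSX S0 SX; have [T0 _] := setD_nontrivial sSX S0 SX.
have := split_gain sSX S0 SX; rewrite cut_cover_cluster //.
have := weight_gap_ge0 sSX S0; have := weight_gap_ge0 (subsetDl X S) T0.
set gS := (_ * INR (volume S))%R; set gT := (_ * _)%R; set e := INR _; lra.
Qed.

Lemma cluster_expands_small S : S \subset X -> S != set0 -> S != X -> (#|S|.*2 <= #|X|)%N ->
  (1 / k * INR (\sum_(C in S) cutE src dst (cover X) C)
     <= INR (cutE src dst (cover X) (cover S)))%R.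
Proof.
move=> sSX S0 SX small; have [T0 _] := setD_nontrivial sSX S0 SX.
have := split_gain sSX S0 SX; rewrite cut_cover_cluster //.
have := weight_gap_ge0 (subsetDl X S) T0.
have S_pos : (0 < #|S|)%N by rewrite card_gt0.
have gap : (2 / k <= alpha #|S| - alpha #|X|)%R by have := alpha_double n_ge2 k_ge S_pos small; lra.
have := Rmult_le_compat_r _ _ _ (pos_INR (volume S)) gap.
have : (INR (\sum_(C in S) cutE src dst (cover X) C) <= INR (volume S))%R.
  by apply/le_INR/leP/leq_sum => C _; exact: cutE_le_boundary.
have := Rinv_0_lt_compat _ k_gt0; have := k_gt0; rewrite /Rdiv.
set c := INR (\sum_(C in S) _); set d := INR (volume S); set gT := (_ * INR (volume _))%R.
set e := INR _; set a := (alpha _ - alpha _)%R; nra.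
Qed.

Lemma cluster_expands S : S \subset X -> S != set0 -> S != X ->
  (1 / k * INR (minn (\sum_(C in S) cutE src dst (cover X) C)
                     (\sum_(C in X :\: S) cutE src dst (cover X) C))
     <= INR (cutE src dst (cover X) (cover S)))%R.
Proof.
move=> sSX S0 SX; have [T0 TX] := setD_nontrivial sSX S0 SX.
have k_div_pos : (0 <= 1 / k)%R by apply/Rlt_le/Rdiv_lt_0_compat; [lra | exact: k_gt0].
have cardX : #|X| = (#|S| + #|X :\: S|)%N by rewrite -(cardsID S X) (setIidPr sSX).
case: (leqP #|S|.*2 #|X|) => small.
  apply: Rle_trans (cluster_expands_small sSX S0 SX small).
  by apply/Rmult_le_compat_l/le_INR/leP/geq_minl.
have smallT : (#|X :\: S|.*2 <= #|X|)%N.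
  by move: small; rewrite cardX -!addnn leq_add2r ltn_add2l => /ltnW.
have := cluster_expands_small (subsetDl X S) T0 TX smallT.
rewrite !cut_cover_cluster ?subsetDl // setDDK // betweenC.
by apply: Rle_trans; apply/Rmult_le_compat_l/le_INR/leP/geq_minr.
Qed.

Lemma part_boundary_inside p : p \in X -> (boundary p <= 4 * between p (cover X :\: p))%N.
Proof.
move=> pX; rewrite leqNgt; apply/negP => outward.
have s1 : [set p] \subset X by rewrite sub1set.
have p_neqX : [set p] != X by apply: contraTneq card_cluster_gt1 => <-; rewrite cards1.
have p_neq0 : [set p] != set0 by rewrite -card_gt0 cards1.
have [Y0 YX] := setD_nontrivial s1 p_neq0 p_neqX.
have notY := proper_sub_not_candidate (subsetDl X [set p]) YX Y0.
have := boundary_setU src dst (disjoint_cover_setD s1 tiX).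
rewrite (cover_setU_setD s1) (cover_setD s1 tiX) cover1 => /(f_equal INR).
rewrite 2!INR_addn INR_muln => eb; rewrite (cover_setD s1 tiX) cover1 in notY.
have gapY := weight_gap_ge0 (subsetDl X [set p]) Y0.
have := alpha_le_half n_ge2 k_ge (ltnW card_cluster_gt1).
move/(Rmult_le_compat_r _ _ _ (pos_INR (boundary p))) => halfp.
move/leP/lt_INR: outward; rewrite INR_muln => outward.
case: candX => _ _; rewrite /volume (big_setD1 _ pX) -/(volume _).
rewrite [in INR #|X|](cardsD1 p X) pX !INR_addn.
move: notY eb gapY halfp outward (k_gt0); rewrite [INR 1]/= [INR 2]/= [INR 4]/=.
set aY := alpha #|_|; set aX := alpha #|X|; set bp := INR (boundary p).
set dY := INR (volume _); set e := INR (between _ _); set bY := INR (boundary _).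
set bX := INR (boundary _); set sY := INR #|_|; lra.
Qed.

End MinimalCandidate.

Lemma exists_cluster : exists X, [/\ X \subset P, (1 < #|X|)%N,
  forall p, p \in X -> (boundary p <= 4 * between p (cover X :\: p))%N,
  forall S, S \subset X -> S != set0 -> S != X ->
    (k / 20 <= INR (cutE src dst (cover X) (cover S)))%R &
  forall S, S \subset X -> S != set0 -> S != X ->
    (1 / k * INR (minn (\sum_(C in S) cutE src dst (cover X) C)
                       (\sum_(C in X :\: S) cutE src dst (cover X) C))
       <= INR (cutE src dst (cover X) (cover S)))%R].
Proof.
have [X [candX minX]] := ex_minimizer (fun X => #|X|) (ex_intro _ P candidate_P).
have [sXP _ _] := candX.
exists X; split=> //.
- exact: card_cluster_gt1 candX.
- exact: part_boundary_inside candX minX.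
- exact: cluster_cut_ge candX minX.
- exact: cluster_expands candX minX.
Qed.

End Cluster.

Lemma partition_merge (T : finType) (P X : {set {set T}}) (D : {set T}) :
  partition P D -> X \subset P -> X != set0 -> partition (cover X |: (P :\: X)) D.
Proof.
move=> partP sXP X0; have tiP := partition_trivIset partP.
have sXD : cover X \subset D by rewrite -(cover_partition partP) -(cover_setU_setD sXP) subsetUl.
have partPX : partition (P :\: X) (D :\: cover X).
  rewrite /partition (cover_setD sXP tiP) (cover_partition partP) eqxx trivIsetD //=.
  by rewrite inE negb_and (partition0 partP) orbT.
have /set0Pn[p pX] := X0; have /set0Pn[v vp] := partition_neq0 partP (subsetP sXP _ pX).
have cX0 : cover X != set0 by apply/set0Pn; exists v; apply/bigcupP; exists p.
have := partitionU1 partPX cX0 (disjoint_setDr _ _).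
by rewrite -{2}(setID D (cover X)) (setIidPr sXD) setUC.
Qed.

Lemma kEdgeConn_cover (V E : finType) (src dst : E -> V) (c : R) (X : {set {set V}}) :
  (forall x, x \in X -> kEdgeConn src dst c x) ->
  (forall S : {set {set V}}, S \subset X -> S != set0 -> S != X ->
     (c <= INR (cutE src dst (cover X) (cover S)))%R) ->
  kEdgeConn src dst c (cover X).
Proof.
move=> conn_x cut_parts S sS S0 SX.
case: (classic (exists x, [/\ x \in X, S :&: x != set0 & ~~ (x \subset S)])).
  case=> x [xX Sx xS].
  have sx : x \subset cover X by apply/subsetP => v vx; apply/bigcupP; exists x.
  apply: Rle_trans (conn_x x xX (S :&: x) (subsetIr _ _) Sx _) _.
    by apply: contra xS => /eqP <-; rewrite subsetIl.
  exact/le_INR/leP/cutE_setI_le.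
move=> no_cut; set T := [set x in X | x \subset S].
have cT : cover T = S.
  apply/setP => v; apply/bigcupP/idP => [[x /setIdP[_ xS] /(subsetP xS)] //|vS].
  have /bigcupP[x xX vx] := subsetP sS _ vS; exists x => //; rewrite inE xX /=.
  apply: contraT => xS; case: no_cut; exists x; split=> //.
  by apply/set0Pn; exists v; rewrite inE vS vx.
rewrite -cT; apply: cut_parts; first by apply/subsetP => x /setIdP[].
  by apply: contra S0; rewrite -cT => /eqP ->; rewrite /cover big_set0.
by apply: contra SX; rewrite -cT => /eqP ->.
Qed.

Section LaminarFamily.
Variables (V E : finType) (src dst : E -> V) (k : R).
Implicit Types (X S P F : {set {set V}}) (A B C D p x : {set V}).
Local Notation boundary := (boundary src dst).
Local Notation between := (between src dst).
Local Notation cutE := (cutE src dst).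

Definition is_child F C B : bool :=
  (C \proper B) && [forall D, (D \in F) ==> (C \proper D) ==> (B \subset D)].

Definition children_in F B : {set {set V}} := [set C in F | is_child F C B].

Definition contracted_expander B (Cs : {set {set V}}) : Prop :=
  forall S, S \subset Cs -> S != set0 -> S != Cs ->
    (1 / k * INR (minn (\sum_(C in S) cutE B C) (\sum_(C in Cs :\: S) cutE B C))
       <= INR (cutE B (cover S)))%R.

(* The sets of F will be the vertex sets V(t) of the hierarchy. *)
Record good_family P F : Prop := {
  good_setT : setT \in F;
  good_set0 : set0 \notin F;
  good_parts : P \subset F;
  good_laminar : forall A B, A \in F -> B \in F -> [|| A \subset B, B \subset A | [disjoint A & B]];
  good_refined : forall A p, A \in F -> p \in P -> (p \subset A) || [disjoint p & A];
  good_conn : forall A, A \in F -> kEdgeConn src dst (k / 20) A;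
  good_inside : forall C B, C \in F -> B \in F -> is_child F C B ->
    (boundary C <= 4 * between C (B :\: C))%N;
  good_expander : forall B, B \in F -> contracted_expander B (children_in F B)
}.

Section Merge.
Variables (P X F' : {set {set V}}).
Hypothesis partP : partition P [set: V].
Hypothesis sXP : X \subset P.
Hypothesis X_gt1 : (1 < #|X|)%N.
Hypothesis X_inside : forall p, p \in X -> (boundary p <= 4 * between p (cover X :\: p))%N.
Hypothesis X_expander : contracted_expander (cover X) X.
Hypothesis P_conn : forall p, p \in P -> kEdgeConn src dst (k / 20) p.
Hypothesis goodF' : good_family (cover X |: (P :\: X)) F'.

Local Notation cX := (cover X).
Local Notation F := (F' :|: X).

Lemma part_neq0 x : x \in X -> x != set0.
Proof. by move=> xX; apply: (partition_neq0 partP); exact: (subsetP sXP). Qed.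

Lemma part_sub_cluster x : x \in X -> x \subset cX.
Proof. by move=> xX; apply: bigcup_sup. Qed.

Lemma parts_disjoint x y : x \in X -> y \in X -> x != y -> [disjoint x & y].
Proof.
by move=> xX yX; apply: (elimT trivIsetP (partition_trivIset partP)); exact: (subsetP sXP).
Qed.

Lemma part_proper_cluster x : x \in X -> x \proper cX.
Proof.
move=> xX; rewrite properE part_sub_cluster //=; apply/negP => sXx.
have [y yX yx] : exists2 y, y \in X & y != x.
  have [y [z [yX zX yz]]] := card_gt1P X_gt1.
  by case: (eqVneq y x) => [eyx|]; [exists z; rewrite // -eyx eq_sym | exists y].
have := nonempty_disjoint_sub (part_neq0 yX) (subset_trans (part_sub_cluster yX) sXx).
by rewrite parts_disjoint.
Qed.

Lemma cluster_in_family : cX \in F'.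
Proof. by apply: (subsetP (good_parts goodF')); rewrite setU11. Qed.

Let family_neq0 C : C \in F' -> C != set0 := set0_notin_neq0 (good_set0 goodF').

Lemma family_vs_cluster C : C \in F' -> (cX \subset C) || [disjoint cX & C].
Proof. by move=> CF; apply: (good_refined goodF' CF); rewrite setU11. Qed.

Lemma family_not_sub_part C x : C \in F' -> x \in X -> ~~ (C \subset x).
Proof.
move=> CF xX; apply/negP => sCx; have /andP[_ /negP] := part_proper_cluster xX; apply.
case/orP: (family_vs_cluster CF) => [sXC|dXC]; first exact: subset_trans sXC sCx.
have := nonempty_disjoint_sub (family_neq0 CF) (subset_trans sCx (part_sub_cluster xX)).
by rewrite disjoint_sym dXC.
Qed.

Lemma family_sub_cluster C : C \in F' -> C \subset cX -> C = cX.
Proof.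
move=> CF sCX; case/orP: (family_vs_cluster CF) => [sXC|dXC].
  by apply/eqP; rewrite eqEsubset sCX.
by have := nonempty_disjoint_sub (family_neq0 CF) sCX; rewrite disjoint_sym dXC.
Qed.

Lemma family_sup_part B x : x \in X -> B \in F' -> x \subset B -> cX \subset B.
Proof.
move=> xX BF sxB; case/orP: (family_vs_cluster BF) => // dXB.
have := nonempty_disjoint_sub (part_neq0 xX) sxB.
by rewrite (disjointWl (part_sub_cluster xX) dXB).
Qed.

Lemma part_notin_family x : x \in X -> x \notin F'.
Proof. by move=> xX; apply: contraL (subxx x) => xF; exact: family_not_sub_part. Qed.

Lemma is_child_merged_family C B : C \in F' -> is_child F C B = is_child F' C B.
Proof.
move=> CF; rewrite /is_child; congr (_ && _); apply/forallP/forallP => sup D; have := sup D.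
  by rewrite inE; case: (D \in F').
rewrite inE; case: (D \in F') => //= _; apply/implyP => DX; apply/implyP => /andP[sCD _].
by move: (family_not_sub_part CF DX); rewrite sCD.
Qed.

Lemma is_child_part x B : x \in X -> B \in F -> is_child F x B = (B == cX).
Proof.
move=> xX; rewrite inE => /orP[BF|BX].
  apply/idP/eqP => [/andP[_ /forallP /(_ cX)]|->].
    by rewrite inE cluster_in_family part_proper_cluster //= => /(family_sub_cluster BF).
  rewrite /is_child part_proper_cluster //=; apply/forallP => D; rewrite inE.
  apply/implyP => /orP[DF|DX]; apply/implyP => /andP[sxD Dx].
    exact: family_sup_part xX DF sxD.
  case: (eqVneq x D) => [exD|xD]; first by rewrite exD subxx in Dx.
  by have := nonempty_disjoint_sub (part_neq0 xX) sxD; rewrite parts_disjoint.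
have -> : (B == cX) = false.
  by apply: contraNF (part_notin_family BX) => /eqP ->; exact: cluster_in_family.
apply/negP => /andP[/andP[sxB Bx] _].
case: (eqVneq x B) => [exB|xB]; first by rewrite exB subxx in Bx.
by have := nonempty_disjoint_sub (part_neq0 xX) sxB; rewrite parts_disjoint.
Qed.

Lemma children_part x : x \in X -> children_in F x = set0.
Proof.
move=> xX; apply/setP => C; rewrite !inE; apply/negP => /andP[/orP[CF|CX] ch].
  move: ch; rewrite is_child_merged_family // => /andP[/andP[sCx _] _].
  by move: (family_not_sub_part CF xX); rewrite sCx.
move: ch; rewrite is_child_part ?inE ?xX ?orbT // => /eqP ex.
by have := part_proper_cluster xX; rewrite ex properxx.
Qed.

Lemma children_cluster : children_in F cX = X.
Proof.
apply/setP => C; rewrite !inE; case CF: (C \in F') => /=.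
  rewrite is_child_merged_family //; have -> : (C \in X) = false.
    by apply: contraTF CF => /part_notin_family.
  by apply/negP => /andP[/andP[sCX XC] _]; rewrite (family_sub_cluster CF sCX) subxx in XC.
by case CX: (C \in X); rewrite //= is_child_part // ?eqxx // inE cluster_in_family.
Qed.

Lemma children_other B : B \in F' -> B != cX -> children_in F B = children_in F' B.
Proof.
move=> BF BX; apply/setP => C; rewrite !inE; case CF: (C \in F') => /=.
  by rewrite is_child_merged_family.
by case CX: (C \in X); rewrite //= is_child_part ?inE ?BF // (negbTE BX).
Qed.

Lemma merged_laminar A B : A \in F -> B \in F -> [|| A \subset B, B \subset A | [disjoint A & B]].
Proof.
rewrite !inE => /orP[AF|AX] /orP[BF|BX].
- exact: (good_laminar goodF' AF BF).
- case/orP: (family_vs_cluster AF) => [sXA|dXA].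
    by rewrite (subset_trans (part_sub_cluster BX) sXA) orbT.
  by rewrite disjoint_sym (disjointWl (part_sub_cluster BX) dXA) !orbT.
- case/orP: (family_vs_cluster BF) => [sXB|dXB].
    by rewrite (subset_trans (part_sub_cluster AX) sXB).
  by rewrite (disjointWl (part_sub_cluster AX) dXB) !orbT.
- by case: (eqVneq A B) => [->|AB]; rewrite ?subxx // parts_disjoint ?orbT.
Qed.

Lemma merged_refined A p : A \in F -> p \in P -> (p \subset A) || [disjoint p & A].
Proof.
rewrite inE => /orP[AF|AX] pP.
  case pX: (p \in X); last by apply: (good_refined goodF' AF); rewrite !inE pX pP orbT.
  case/orP: (family_vs_cluster AF) => [sXA|dXA].
    by rewrite (subset_trans (part_sub_cluster pX) sXA).
  by rewrite (disjointWl (part_sub_cluster pX) dXA) orbT.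
case: (eqVneq p A) => [->|pA]; first by rewrite subxx.
by rewrite (elimT trivIsetP (partition_trivIset partP) _ _ pP (subsetP sXP _ AX) pA) orbT.
Qed.

Lemma good_family_merge : good_family P F.
Proof.
split; [| | |exact: merged_laminar | exact: merged_refined | | |].
- by rewrite inE (good_setT goodF').
- by rewrite inE negb_or (good_set0 goodF'); apply: contraT => /negbNE/part_neq0/eqP.
- apply/subsetP => p pP; rewrite inE; case pX: (p \in X); rewrite ?orbT //.
  by rewrite (subsetP (good_parts goodF')) // !inE pX pP orbT.
- move=> A; rewrite inE => /orP[AF|AX]; first exact: (good_conn goodF' AF).
  by apply: P_conn; exact: (subsetP sXP).
- move=> C B; rewrite !inE => /orP[CF|CX] BF.
    rewrite is_child_merged_family // => ch; case/orP: BF => [BF|BX].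
      exact: (good_inside goodF' CF BF ch).
    by case/andP: ch => /andP[sCB _] _; move: (family_not_sub_part CF BX); rewrite sCB.
  by rewrite is_child_part ?inE // => /eqP ->; apply: X_inside.
- move=> B; rewrite inE => /orP[BF|BX].
    case: (eqVneq B cX) => [->|BcX]; first by rewrite children_cluster.
    by rewrite children_other //; exact: (good_expander goodF' BF).
  by rewrite children_part // => S; rewrite subset0 => /eqP ->; rewrite eqxx.
Qed.

End Merge.

Lemma good_family_whole : (0 < #|V|)%N -> kEdgeConn src dst (k / 20) [set: V] ->
  good_family [set setT] [set setT].
Proof.
move=> V0 connT; have T0 : [set: V] != set0 by rewrite -card_gt0 cardsT.
have no_child B C : C \in [set setT] -> ~~ is_child [set setT] C B.
  by move=> /set1P ->; rewrite /is_child properE subsetT andbF.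
split=> //; rewrite ?set11 //.
- by rewrite inE eq_sym.
- by move=> A B /set1P -> /set1P ->; rewrite subxx.
- by move=> A p /set1P -> /set1P ->; rewrite subxx.
- by move=> A /set1P ->.
- by move=> C B CT _ ch; have := no_child B C CT; rewrite ch.
- move=> B _ S; have -> : children_in [set setT] B = set0.
    by apply/setP => C; rewrite in_set in_set0; apply/negP => /andP[/(no_child B)/negP].
  by rewrite subset0 => /eqP ->; rewrite eqxx.
Qed.

Hypothesis n_ge2 : (2 <= #|V|)%N.
Hypothesis k_ge : (7 * log2 (INR #|V|) <= k)%R.
Hypothesis boundary_ge_k :
  forall S : {set V}, S != set0 -> S != setT -> (k <= INR (boundary S))%R.

Lemma partition_card_le1 P : partition P [set: V] -> (#|P| <= 1)%N -> P = [set setT].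
Proof.
move=> partP P_le1; have P0 : P != set0.
  have /card_gt0P[v _] : (0 < #|V|)%N by apply: ltnW.
  have /bigcupP[A AP _] : v \in cover P by rewrite (cover_partition partP) inE.
  by apply/set0Pn; exists A.
have /cards1P[A eP] : #|P| == 1%N by rewrite eqn_leq P_le1 card_gt0.
by move: (cover_partition partP); rewrite eP cover1 => ->.
Qed.

Lemma exists_good_family P : partition P [set: V] ->
  (forall p, p \in P -> kEdgeConn src dst (k / 20) p) -> exists F, good_family P F.
Proof.
elim: #|P|.+1 {-2}P (ltnSn #|P|) => // m IH {}P size_P partP P_conn.
case: (leqP #|P| 1) => [P_le1|P_gt1].
  rewrite (partition_card_le1 partP P_le1) in P_conn *; exists [set setT].
  by apply: good_family_whole; [exact: ltnW | apply: P_conn; rewrite set11].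
have [X [sXP X_gt1 X_inside X_cut X_expander]] :=
  exists_cluster n_ge2 k_ge boundary_ge_k partP P_gt1.
have X0 : X != set0 by rewrite -card_gt0 ltnW.
have X_conn : kEdgeConn src dst (k / 20) (cover X).
  by apply: kEdgeConn_cover X_cut => x xX; apply: P_conn; exact: (subsetP sXP).
have size_P' : (#|cover X |: (P :\: X)| < m)%N.
  rewrite cardsU1 (cardsDS sXP); have := leq_b1 (cover X \notin P :\: X).
  by move: size_P X_gt1 (subset_leq_card sXP); lia.
have P'_conn p : p \in cover X |: (P :\: X) -> kEdgeConn src dst (k / 20) p.
  by case/setU1P => [->|/setDP[pP _]]; [exact: X_conn | exact: P_conn].
have [F' goodF'] := IH _ size_P' (partition_merge partP sXP X0) P'_conn.
exists (F' :|: X).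
exact: good_family_merge partP sXP X_gt1 X_inside X_expander P_conn goodF'.
Qed.

End LaminarFamily.

Section FamilyTree.
Variables (V : finType) (F : {set {set V}}).
Hypothesis F_setT : setT \in F.
Hypothesis F_set0 : set0 \notin F.
Hypothesis F_set1 : forall v, [set v] \in F.
Hypothesis F_laminar :
  forall A B, A \in F -> B \in F -> [|| A \subset B, B \subset A | [disjoint A & B]].

Definition family_node : finType := {A : {set V} | A \in F}.
Implicit Types (t u w c : family_node).

Definition node_parent t : option family_node := [pick u | is_child F (val t) (val u)].
Definition node_leaf (v : V) : family_node := exist _ [set v] (F_set1 v).

Let family_neq0 A : A \in F -> A != set0 := set0_notin_neq0 F_set0.

Lemma is_child_uniq C B1 B2 :
  B1 \in F -> B2 \in F -> is_child F C B1 -> is_child F C B2 -> B1 = B2.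
Proof.
move=> B1F B2F /andP[p1 /forallP min1] /andP[p2 /forallP min2].
have := min1 B2; have := min2 B1; rewrite B1F B2F p1 p2 /= => s21 s12.
by apply/eqP; rewrite eqEsubset s12 s21.
Qed.

Lemma node_parentP t u : node_parent t = Some u <-> is_child F (val t) (val u).
Proof.
rewrite /node_parent; case: pickP => [x ch|none]; split=> //.
- by case=> <-.
- by move=> ch'; congr Some; apply: val_inj; exact: is_child_uniq (valP x) (valP u) ch ch'.
- by move=> ch; have := none u; rewrite ch.
Qed.

Lemma exists_parent C : C \in F -> C != setT -> exists2 B, B \in F & is_child F C B.
Proof.
move=> CF CT; have CT' : C \proper setT by rewrite properT.
have [B [[BF CB] Bmin]] := ex_minimizer (fun D : {set V} => #|D|)
  (ex_intro (fun D => D \in F /\ C \proper D) _ (conj F_setT CT')).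
exists B => //; rewrite /is_child CB; apply/forallP => D; apply/implyP => DF; apply/implyP => CD.
case/or3P: (F_laminar BF DF) => // [sDB|dBD].
  by have /eqP -> : D == B by rewrite eqEcard sDB Bmin.
have /andP[sCB _] := CB; have /andP[sCD _] := CD.
have := nonempty_disjoint_sub (family_neq0 CF) sCB.
by rewrite disjoint_sym (disjointWr sCD dBD).
Qed.

Lemma node_parent_proper t u : node_parent t = Some u -> val t \proper val u.
Proof. by move/node_parentP => /andP[]. Qed.

Lemma node_parent_none t : node_parent t = None <-> val t = setT.
Proof.
split=> [tNone|tT].
  apply/eqP; apply: contraT => tT; have [B BF ch] := exists_parent (valP t) tT.
  by have := proj2 (node_parentP t (exist _ B BF)) ch; rewrite tNone.
case tu: (node_parent t) => [u|] //; have := node_parent_proper tu.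
by rewrite tT properE subsetT andbF.
Qed.

Lemma connect_node_subset u w : connect (upr node_parent) u w -> val u \subset val w.
Proof.
case/connectP => p; elim: p u => [|y p IH] u /=; first by move=> _ ->.
case/andP => /eqP uy ypath wlast; apply: subset_trans (IH y ypath wlast).
by case/andP: (node_parent_proper uy).
Qed.

(* Climbing parents strictly increases the set, so the measure #|w| - #|u| decreases. *)
Lemma subset_connect_node u w : val u \subset val w -> connect (upr node_parent) u w.
Proof.
move: u; suff climb m u : (#|val w| - #|val u| <= m)%N -> val u \subset val w ->
    connect (upr node_parent) u w by move=> u; exact: climb (leqnn _).
elim: m u => [|m IH] u size_u suw.
  have /eqP/val_inj -> : val u == val w by rewrite eqEcard suw -subn_eq0 -leqn0.
  exact: connect0.
case: (eqVneq (val u) (val w)) => [/val_inj ->|uw]; first exact: connect0.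
have uT : val u != setT by apply: contraNneq uw => uT; rewrite eqEsubset suw uT subsetT.
have [B BF ch] := exists_parent (valP u) uT.
have uy : node_parent u = Some (exist _ B BF) by apply/node_parentP.
have syw : B \subset val w.
  case/andP: ch => _ /forallP /(_ (val w)); rewrite (valP w) /= properEneq uw suw.
  by move/implyP; apply.
apply: connect_trans (connect1 _) (IH (exist _ B BF) _ syw); first by rewrite /upr uy.
have lt_uB : (#|val u| < #|B|)%N by exact: proper_card (node_parent_proper uy).
have le_Bw : (#|B| <= #|val w|)%N by exact: subset_leq_card syw.
change (#|val w| - #|B| <= m)%N; rewrite -ltnS.
exact: leq_trans (ltn_sub2l (leq_trans lt_uB le_Bw) lt_uB) size_u.
Qed.

Lemma Vt_node t : Vt node_parent node_leaf t = val t.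
Proof.
apply/setP => v; rewrite inE; apply/idP/idP => [/connect_node_subset|vt].
  by rewrite /= sub1set.
by apply: subset_connect_node; rewrite /= sub1set.
Qed.

(* The child of t containing v is the parent of a largest set of F strictly
   between [set v] and t. *)
Lemma exists_child_mem t v : v \in val t -> val t != [set v] ->
  exists c, node_parent c = Some t /\ v \in val c.
Proof.
move=> vt tv; have vt' : [set v] \proper val t by rewrite properEneq eq_sym tv sub1set.
have [D [[DF [vD Dt]] Dmax]] := ex_minimizer (fun D : {set V} => #|V| - #|D|)
  (ex_intro (fun D => D \in F /\ v \in D /\ D \proper val t) _
             (conj (F_set1 v) (conj (set11 v) vt'))).
have DT : D != setT by apply: contraTneq Dt => ->; rewrite properE subsetT andbF.
have [B BF ch] := exists_parent DF DT; have /andP[/andP[sDB _] /forallP Bmin] := ch.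
have sBt : B \subset val t by have := Bmin (val t); rewrite (valP t) Dt.
have eBt : B = val t.
  apply/eqP; rewrite eqEsubset sBt /=; apply: contraT => tB.
  have Bt : B \proper val t by rewrite properE sBt.
  have := Dmax B (conj BF (conj (subsetP sDB _ vD) Bt)).
  by rewrite leq_sub2lE ?max_card // leqNgt (proper_card (proj1 (andP ch))).
by exists (exist _ D DF); split=> //; apply/node_parentP; rewrite /= -eBt.
Qed.

Lemma family_tree_hierarchy : is_hierarchy node_parent node_leaf.
Proof.
split.
- exists (exist _ setT F_setT); split; first exact/node_parent_none.
  by move=> u; apply: subset_connect_node; exact: subsetT.
- move=> t /set0Pn[c]; rewrite inE => /eqP ct.
  have /andP[sct /subsetPn[v vt vc]] := node_parent_proper ct.
  have tv : val t != [set v].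
    apply: contraNneq vc => tv; have /set0Pn[w wc] := family_neq0 (valP c).
    by have := subsetP sct _ wc; rewrite tv => /set1P <-.
  have [c' [c't vc']] := exists_child_mem vt tv.
  apply/card_gt1P; exists c, c'; rewrite !inE ct c't; split=> //.
  by apply: contraNneq vc => ->.
- by move=> v w /(congr1 val)/set1_inj.
- move=> t; split=> [noch|[v <-]].
    have /set0Pn[v vt] := family_neq0 (valP t).
    case: (eqVneq (val t) [set v]) => [tv|tv]; first by exists v; apply: val_inj.
    have [c [ct _]] := exists_child_mem vt tv.
    have : c \in children node_parent t by rewrite inE ct.
    by rewrite noch inE.
  apply/setP => c; rewrite !inE; apply/negP => /eqP cv.
  have /andP[] := node_parent_proper cv; rewrite /= subset1 => /orP[/eqP ->|/eqP c0].
    by rewrite subxx.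
  by case/negP: (family_neq0 (valP c)); apply/eqP; exact: c0.
Qed.

Lemma children_node t : val @: children node_parent t = children_in F (val t).
Proof.
apply/setP => C; apply/imsetP/idP => [[c /[!inE] /eqP/node_parentP ch ->]|].
  by rewrite (valP c) ch.
rewrite /children_in inE => /andP[CF ch]; exists (exist _ C CF) => //.
by rewrite inE; apply/eqP/node_parentP.
Qed.

End FamilyTree.

Section GoodFamilyTree.
Variables (V E : finType) (src dst : E -> V) (k : R) (P F : {set {set V}}).
Hypothesis goodF : good_family src dst k P F.
Hypothesis F_set1 : forall v, [set v] \in F.
Local Notation par := (@node_parent V F).
Local Notation Vt := (Vt par (node_leaf F_set1)).
Let Vt_val := Vt_node (good_setT goodF) (good_set0 goodF) F_set1 (good_laminar goodF).

Lemma node_boundary_inside t p : par t = Some p ->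
  (/ 4 * INR (between src dst (Vt t) (~: Vt t))
     <= INR (between src dst (Vt t) (Vt p :\: Vt t)))%R.
Proof.
move/node_parentP => ch; rewrite !Vt_val.
have /le_INR := elimT leP (good_inside goodF (valP t) (valP p) ch).
by rewrite INR_muln [INR 4]/= /boundary; lra.
Qed.

Lemma node_contr_expander t : contr_expander src dst par (node_leaf F_set1) (1 / k) t.
Proof.
move=> S sS S0 SC.
have vol_node (S' : {set family_node F}) :
    (\sum_(c in S') degC src dst par (node_leaf F_set1) t c)%N
      = (\sum_(C in val @: S') cutE src dst (val t) C)%N.
  rewrite big_imset /=; last by move=> x y _ _; apply: val_inj.
  by apply: eq_bigr => c _; rewrite /degC !Vt_val.
have -> : bdC src dst par (node_leaf F_set1) t S = cutE src dst (val t) (cover (val @: S)).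
  by rewrite /bdC Vt_val cover_imset; congr cutE; apply: eq_bigr => c _; exact: Vt_val.
rewrite /dC !vol_node imsetD_inj; last exact: val_inj.
rewrite children_node; apply: (good_expander goodF (valP t)).
- by rewrite -children_node imsetS.
- by rewrite imset_eq0.
- by rewrite -children_node; apply: contra SC => /eqP/(imset_inj val_inj) ->.
Qed.

End GoodFamilyTree.

Lemma partition_singletons (T : finType) : partition [set [set x] | x : T] [set: T].
Proof.
apply/and3P; split.
- by apply/eqP/setP => x; rewrite cover_imset inE; apply/bigcupP; exists x; rewrite ?inE.
- apply/trivIsetP => _ _ /imsetP[x _ ->] /imsetP[y _ ->] xy.
  by rewrite disjoints1 inE eq_sym; apply: contra xy => /eqP ->.
- by apply/imsetP => -[x _ /setP/(_ x)]; rewrite !inE eqxx.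
Qed.

Lemma kEdgeConn_set1 (V E : finType) (src dst : E -> V) (c : R) (v : V) :
  kEdgeConn src dst c [set v].
Proof. by move=> S; rewrite subset1 => /orP[/eqP ->|/eqP ->]; rewrite eqxx. Qed.

Theorem mainTheorem8 (V E : finType) (src dst : E -> V) (k : R) :
  (forall e : E, src e != dst e) ->
  (2 <= #|V|)%N ->
  kEdgeConn src dst k [set: V] ->
  (7 * (ln (INR #|V|) / ln 2) <= k)%R ->
  exists (N : finType) (par : N -> option N) (lf : V -> N),
    [/\ is_hierarchy par lf,
        (forall t : N, kEdgeConn src dst (k / 20) (Vt par lf t)),
        (forall t p : N, par t = Some p ->
           (/ 4 * INR (between src dst (Vt par lf t) (~: Vt par lf t))
              <= INR (between src dst (Vt par lf t) (Vt par lf p :\: Vt par lf t)))%R)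
      & (forall t : N, children par t != set0 -> contr_expander src dst par lf (1 / k) t)].
Proof.
(* Loops never cross a cut. *)
move=> _ n_ge2 connG k_ge.
have boundary_ge_k S : S != set0 -> S != setT -> (k <= INR (boundary src dst S))%R.
  by move=> S0 ST; rewrite -cutE_setT; apply: connG; rewrite ?subsetT.
have [F goodF] : exists F, good_family src dst k [set [set v] | v : V] F.
  apply: (exists_good_family n_ge2 _ boundary_ge_k (partition_singletons V)); first exact: k_ge.
  by move=> _ /imsetP[v _ ->]; exact: kEdgeConn_set1.
have F_set1 v : [set v] \in F by apply: (subsetP (good_parts goodF)); exact: imset_f.
have FT := good_setT goodF; have F0 := good_set0 goodF; have Flam := good_laminar goodF.
exists (family_node F), (@node_parent V F), (node_leaf F_set1); split.
- exact: family_tree_hierarchy.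
- by move=> t; rewrite Vt_node //; exact: (good_conn goodF (valP t)).
- exact: node_boundary_inside goodF F_set1.
- by move=> t _; exact: node_contr_expander goodF F_set1 t.
Qed.
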